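(* Let $N\ge1$, $K\ge2$ be integers with $N$ divisible by $K$, put $m=N/K$, and let $\alpha\in[0,1]$. Let $\sigma^A,\sigma^B$ be mixed strategies of $\mathcal{B}_\alpha(N,K)$ such that, for every battlefield $k$, the marginal $\sigma^A_k$ is the uniform distribution on the odd integers $\{1,3,\ldots,2m-1\}$ and the marginal $\sigma^B_k$ is the uniform distribution on the even integers $\{0,2,\ldots,2m\}$. Then $(\sigma^A,\sigma^B)$ is a Nash equilibrium of $\mathcal{B}_\alpha(N,K)$, and each player's expected payoff equals $K/2$.
   Context: Fix integers $N\ge1$, $K\ge2$ and a real number $\alpha$. The Colonel Blotto game $\mathcal{B}_\alpha(N,K)$ is the two-player simultaneous-move game with players $A,B$, each with pure strategy set $S=\{s\in\{0,1,\ldots,N\}^K:\sum_{k=1}^K s_k=N\}$, in which the payoff of player $i$ at the pure profile $(s^i,s^{-i})$ is $\pi^i(s^i,s^{-i})=\sum_{k=1}^K\big(\mathbf 1[s^i_k>s^{-i}_k]+\tfrac{\alpha}{2}\mathbf 1[s^i_k=s^{-i}_k]\big)$. Mixed strategies are probability distributions on $S$, with expected payoffs under independent randomization; a Nash equilibrium is a mixed profile from which no unilateral deviation raises a player's expected payoff. For a mixed strategy $\sigma$ and battlefield $k$, the marginal $\sigma_k$ is the distribution of $s_k$ when $s\sim\sigma$. *)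

From HB Require Import structures.
From mathcomp Require Import all_boot all_order all_algebra.
From mathcomp Require Import reals.
Set Implicit Arguments. Unset Strict Implicit. Unset Printing Implicit Defensive.
Import Order.TTheory GRing.Theory Num.Theory.
Local Open Scope ring_scope.

Definition alloc (N K : nat) := {ffun 'I_K -> 'I_N.+1}.

Definition is_pure (N K : nat) (s : alloc N K) : bool :=
  (\sum_(k < K) (s k : nat))%N == N.

Definition payoff (R : realType) (N K : nat) (alpha : R) (s t : alloc N K) : R :=
  \sum_(k < K) (((t k : nat) < s k)%N%:R + alpha / 2 * ((s k : nat) == t k)%:R).

Definition mixed (R : realType) (N K : nat) (sigma : {ffun alloc N K -> R}) : Prop :=
  [/\ forall s, 0 <= sigma s,
      \sum_s sigma s = 1
    & forall s, ~~ is_pure s -> sigma s = 0].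

Definition exp_payoff (R : realType) (N K : nat) (alpha : R)
  (sigma tau : {ffun alloc N K -> R}) : R :=
  \sum_s \sum_t sigma s * tau t * payoff alpha s t.

Definition nash (R : realType) (N K : nat) (alpha : R)
  (sA sB : {ffun alloc N K -> R}) : Prop :=
  [/\ mixed sA, mixed sB,
      forall tau, mixed tau -> exp_payoff alpha tau sB <= exp_payoff alpha sA sB
    & forall tau, mixed tau -> exp_payoff alpha tau sA <= exp_payoff alpha sB sA].

Definition marginal (R : realType) (N K : nat) (sigma : {ffun alloc N K -> R})
  (k : 'I_K) (j : 'I_N.+1) : R :=
  \sum_(s : alloc N K | s k == j) sigma s.

From mathcomp Require Import all_boot all_order all_algebra.
From mathcomp Require Import reals.
From mathcomp Require Import ring lra zify.
Import Order.TTheory GRing.Theory Num.Theory.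

(* A pure allocation earns, against a mixed strategy, the sum over battlefields
   of its one-battlefield payoff [duel] against the marginal there.  A win or tie
   (worth alpha/2 <= 1/2) against an odd value j+1 is paid for by half of the
   indicators of j and j+1 lying below x, so x soldiers facing the uniform
   distribution on the m odd values below 2m earn at most x/(2m); shifting by one,
   against the m+1 even values up to 2m they earn at most (x+1)/(2(m+1)).  Since
   the allocations sum to N = mK, no deviation earns more than K/2 against either
   strategy.  Odd and even allocations never tie, so the two equilibrium payoffs
   add up to K and both equal K/2. *)

Set Implicit Arguments.
Unset Strict Implicit.
Unset Printing Implicit Defensive.

Lemma big_nat_double (T : Type) (idx : T) (op : Monoid.law idx) (F : nat -> T) n :
  \big[op/idx]_(0 <= j < n.*2) F j = \big[op/idx]_(0 <= i < n) op (F i.*2) (F i.*2.+1).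
Proof.
elim: n => [|n IHn]; first by rewrite !big_geq.
by rewrite doubleS !big_nat_recr //= IHn Monoid.mulmA.
Qed.

Lemma sum_nat_ltn n x : (\sum_(0 <= j < n) (j < x) = minn n x)%N.
Proof.
elim: n => [|n IHn]; first by rewrite big_geq ?min0n.
by rewrite big_nat_recr //= IHn; case: (ltnP n x) => hnx /=; lia.
Qed.

Local Open Scope ring_scope.

Section Duel.
Variables (R : realType) (alpha : R).

Definition duel (x j : nat) : R := (j < x)%N%:R + alpha / 2 * (x == j)%:R.

Lemma duel_ge0 x j : 0 <= alpha -> 0 <= duel x j.
Proof. by move=> alpha_ge0; rewrite /duel addr_ge0 // mulr_ge0 // divr_ge0. Qed.

Lemma duelSS x j : duel x.+1 j.+1 = duel x j.
Proof. by rewrite /duel ltnS eqSS. Qed.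

Lemma duel_le_pair x j : alpha <= 1 ->
  duel x j.+1 <= ((j < x)%N%:R + (j.+1 < x)%N%:R) / 2.
Proof. by move=> alpha_le1; rewrite /duel; case: (ltngtP j.+1 x) => /= hjx; lra. Qed.

Lemma sum_duel_odd_le x n : alpha <= 1 ->
  \sum_(0 <= i < n) duel x i.*2.+1 <= x%:R / 2.
Proof.
move=> alpha_le1.
have pairs : \sum_(0 <= i < n) duel x i.*2.+1 <= (\sum_(0 <= j < n.*2) (j < x))%N%:R / 2.
  elim: n => [|n IHn]; first by rewrite !big_geq // mul0r.
  rewrite doubleS !big_nat_recr //= !natrD.
  have := duel_le_pair x n.*2 alpha_le1; lra.
by apply: le_trans pairs _; rewrite sum_nat_ltn ler_pM2r ?invr_gt0 ?ltr0n // ler_nat geq_minr.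
Qed.

Lemma sum_parity_le M (mg : 'I_M -> R) (G : nat -> R) (b : bool) (c : R) :
  0 <= c -> (forall j, 0 <= G j) -> (forall j : 'I_M, mg j <= c * (odd j == b)%:R) ->
  \sum_j mg j * G j <= c * \sum_(0 <= i < M) G (i.*2 + b)%N.
Proof.
move=> c_ge0 G_ge0 mg_le.
pose H j := (odd j == b)%:R * G j.
have H_ge0 j : 0 <= H j by rewrite mulr_ge0.
apply: (@le_trans _ _ (c * \sum_(0 <= j < M.*2) H j)).
  apply: (@le_trans _ _ (c * \sum_(0 <= j < M) H j)).
    by rewrite big_mkord mulr_sumr; apply: ler_sum => j _; rewrite /H mulrA ler_wpM2r.
  rewrite ler_wpM2l // (@big_cat_nat _ _ _ M 0 M.*2) //= ?lerDl ?sumr_ge0 //.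
  by rewrite -addnn leq_addr.
rewrite big_nat_double ler_wpM2l //; apply: ler_sum => i _.
by rewrite /H /= odd_double; case: (b); rewrite /= ?mul0r ?mul1r ?addr0 ?add0r ?addn0 ?addn1.
Qed.

Lemma odd_support_duel_le M (mg : 'I_M -> R) (c : R) x :
  0 <= alpha <= 1 -> 0 <= c -> (forall j : 'I_M, mg j <= c * (odd j)%:R) ->
  \sum_j mg j * duel x j <= c / 2 * x%:R.
Proof.
case/andP=> alpha_ge0 alpha_le1 c_ge0 mg_le.
have mg_le' j : mg j <= c * (odd j == true)%:R by rewrite eqb_id.
apply: le_trans (sum_parity_le c_ge0 (duel_ge0 x ^~ alpha_ge0) mg_le') _.
under eq_bigr do rewrite addn1.
have -> : c / 2 * x%:R = c * (x%:R / 2) by ring.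
by rewrite ler_wpM2l // sum_duel_odd_le.
Qed.

Lemma even_support_duel_le M (mg : 'I_M -> R) (c : R) x :
  0 <= alpha <= 1 -> 0 <= c -> (forall j : 'I_M, mg j <= c * (~~ odd j)%:R) ->
  \sum_j mg j * duel x j <= c / 2 * x%:R + c / 2.
Proof.
case/andP=> alpha_ge0 alpha_le1 c_ge0 mg_le.
have mg_le' j : mg j <= c * (odd j == false)%:R by rewrite eqbF_neg.
apply: le_trans (sum_parity_le c_ge0 (duel_ge0 x ^~ alpha_ge0) mg_le') _.
under eq_bigr do rewrite addn0 -duelSS.
have -> : c / 2 * x%:R + c / 2 = c * (x.+1%:R / 2) by rewrite -natr1; ring.
by rewrite ler_wpM2l // sum_duel_odd_le.
Qed.

End Duel.

Section Game.
Variables (R : realType) (alpha : R) (N K : nat).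
Implicit Types (s t : alloc N K) (sg tau : {ffun alloc N K -> R}).

Lemma payoffE s t : payoff alpha s t = \sum_(k < K) duel alpha (s k) (t k).
Proof. by []. Qed.

Lemma expect_separable sg (g : 'I_K -> 'I_N.+1 -> R) :
  \sum_s sg s * \sum_(k < K) g k (s k) = \sum_(k < K) \sum_j marginal sg k j * g k j.
Proof.
under eq_bigr do rewrite mulr_sumr.
rewrite exchange_big /=; apply: eq_bigr => k _.
rewrite (partition_big (fun s => s k) xpredT) //=; apply: eq_bigr => j _.
by rewrite /marginal mulr_suml; apply: eq_bigr => s /eqP <-.
Qed.

Lemma exp_payoff_le_pure tau sg (c : R) : mixed tau ->
  (forall s, is_pure s -> \sum_t sg t * payoff alpha s t <= c) ->
  exp_payoff alpha tau sg <= c.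
Proof.
case=> tau_ge0 tau_sum1 tau_pure pure_le.
have -> : exp_payoff alpha tau sg = \sum_s tau s * \sum_t sg t * payoff alpha s t.
  by apply: eq_bigr => s _; rewrite mulr_sumr; apply: eq_bigr => t _; rewrite mulrA.
rewrite -[c]mul1r -tau_sum1 mulr_suml; apply: ler_sum => s _.
have [/pure_le|/tau_pure->] := boolP (is_pure s); last by rewrite !mul0r.
exact: ler_wpM2l.
Qed.

Lemma exp_payoff_le_marginal tau sg (a b : R) : mixed tau ->
  (forall k x, \sum_j marginal sg k j * duel alpha x j <= a * x%:R + b) ->
  exp_payoff alpha tau sg <= a * N%:R + b * K%:R.
Proof.
move=> tau_mixed marginal_le; apply: exp_payoff_le_pure tau_mixed _ => s /eqP s_sum.
under eq_bigr do rewrite payoffE.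
rewrite (expect_separable sg (fun k j => duel alpha (s k) j)).
apply: (@le_trans _ _ (\sum_(k < K) (a * (s k)%:R + b))); first exact: ler_sum.
by rewrite big_split /= -mulr_sumr -natr_sum s_sum sumr_const card_ord -[b *+ K]mulr_natr.
Qed.

Lemma payoffD_swap s t :
  payoff alpha s t + payoff alpha t s =
  K%:R - (1 - alpha) * \sum_(k < K) ((s k : nat) == t k)%:R.
Proof.
have -> : K%:R = \sum_(k < K) 1 :> R by rewrite sumr_const card_ord.
rewrite /payoff -big_split /= mulr_sumr -sumrB.
by apply: eq_bigr => k _; case: (ltngtP (t k : nat) (s k)) => /= _; lra.
Qed.

Lemma exp_payoffD_swap sg tau : mixed sg -> mixed tau ->
  exp_payoff alpha sg tau + exp_payoff alpha tau sg =
  K%:R - (1 - alpha) * \sum_(k < K) \sum_j marginal sg k j * marginal tau k j.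
Proof.
case=> _ sg_sum1 _ [_ tau_sum1 _].
pose ties (s t : alloc N K) : R := \sum_(k < K) ((s k : nat) == t k)%:R.
have ties_marginal :
    \sum_s \sum_t sg s * tau t * ties s t =
    \sum_(k < K) \sum_j marginal sg k j * marginal tau k j.
  rewrite -(expect_separable sg (fun k => marginal tau k)); apply: eq_bigr => s _.
  under eq_bigr do rewrite -mulrA; rewrite -mulr_sumr.
  congr (_ * _); rewrite (expect_separable tau (fun k j => ((s k : nat) == j)%:R)).
  apply: eq_bigr => k _; rewrite (bigD1 (s k)) //= eqxx mulr1 big1 ?addr0 //.
  by move=> j nej; rewrite (_ : _ == _ = false) ?mulr0 // eq_sym; exact: negbTE nej.
have total : \sum_s \sum_t K%:R * (sg s * tau t) = K%:R.
  rewrite -[RHS]mulr1 -sg_sum1 mulr_sumr; apply: eq_bigr => s _.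
  by rewrite -!mulr_sumr tau_sum1 mulr1.
rewrite /exp_payoff [X in _ + X]exchange_big -big_split /= -ties_marginal -{1}total.
rewrite mulr_sumr -sumrB; apply: eq_bigr => s _.
rewrite mulr_sumr -sumrB -big_split /=; apply: eq_bigr => t _.
by rewrite [tau t * _]mulrC -mulrDr payoffD_swap /ties; ring.
Qed.

End Game.

Theorem mainTheorem12 (R : realType) (N K : nat) (alpha : R)
  (sA sB : {ffun alloc N K -> R}) :
  (1 <= N)%N -> (2 <= K)%N -> (K %| N)%N ->
  0 <= alpha <= 1 ->
  mixed sA -> mixed sB ->
  (forall (k : 'I_K) (j : 'I_N.+1),
      marginal sA k j =
      (if odd j && ((j : nat) < 2 * (N %/ K))%N then ((N %/ K)%:R)^-1 else 0)) ->
  (forall (k : 'I_K) (j : 'I_N.+1),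
      marginal sB k j =
      (if ~~ odd j && ((j : nat) <= 2 * (N %/ K))%N then ((N %/ K).+1%:R)^-1 else 0)) ->
  nash alpha sA sB /\
  exp_payoff alpha sA sB = K%:R / 2 /\
  exp_payoff alpha sB sA = K%:R / 2.
Proof.
move=> N_gt0 _ K_dvd_N alpha01 sA_mixed sB_mixed margA margB.
set m := (N %/ K)%N in margA margB.
have N_eq : N%:R = m%:R * K%:R :> R by rewrite -natrM divnK.
have m_neq0 : m%:R != 0 :> R.
  by rewrite pnatr_eq0; apply: contraTneq N_gt0 => m0; rewrite -(divnK K_dvd_N) -/m m0.
have boundA tau : mixed tau -> exp_payoff alpha tau sA <= K%:R / 2.
  move=> tau_mixed; have -> : K%:R / 2 = m%:R^-1 / 2 * N%:R + 0 * K%:R :> R by rewrite N_eq; field.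
  apply: exp_payoff_le_marginal tau_mixed _ => k x; rewrite addr0.
  apply: odd_support_duel_le => // [|j]; first by rewrite invr_ge0.
  by rewrite margA; case: (odd j); case: (_ < _)%N; rewrite /= ?mulr1 ?mulr0 ?invr_ge0.
have boundB tau : mixed tau -> exp_payoff alpha tau sB <= K%:R / 2.
  move=> tau_mixed; pose c := m.+1%:R^-1 / 2 : R.
  have -> : K%:R / 2 = c * N%:R + c * K%:R.
    by rewrite /c N_eq; field; rewrite addrC natr1 pnatr_eq0.
  apply: exp_payoff_le_marginal tau_mixed _ => k x.
  apply: even_support_duel_le => // [|j]; first by rewrite invr_ge0.
  by rewrite margB; case: (odd j); case: (_ <= _)%N; rewrite /= ?mulr1 ?mulr0 ?invr_ge0.
have no_ties : \sum_(k < K) \sum_j marginal sA k j * marginal sB k j = 0.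
  rewrite big1 // => k _; rewrite big1 // => j _.
  by rewrite margA margB; case: (odd j); rewrite /= ?mul0r ?mulr0.
have := exp_payoffD_swap alpha sA_mixed sB_mixed; rewrite no_ties mulr0 subr0 => sum_K.
have leAB := boundB _ sA_mixed; have leBA := boundA _ sB_mixed.
have valA : exp_payoff alpha sA sB = K%:R / 2 by lra.
have valB : exp_payoff alpha sB sA = K%:R / 2 by lra.
split=> //; split=> // tau tau_mixed; by [rewrite valA boundB | rewrite valB boundA].
Qed.
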